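(* Let $(M_0,d,\Gamma)$ be a cone-like space and $\psi:M_0\to\mathbb{R}_+^*$ a function with $\psi\circ f=\rho(f)\psi$ for every $f\in\Gamma$, such that $\psi$ and $\psi^{-1}$ are locally bounded. Then $\psi$ is quasi-linear.
   Context: A cone-like space is a locally compact metric space $(M_0,d)$ together with a finitely generated, non-trivial group $\Gamma$ acting freely and properly discontinuously on $M_0$ by homotheties (i.e. for each $f\in\Gamma$ there is $\rho(f)>0$ with $d(f(x),f(y))=\rho(f)d(x,y)$ for all $x,y$), such that the identity is the only element of $\Gamma$ acting as an isometry, and such that the quotient $M_0/\Gamma$ is compact. The metric completion of a cone-like space is $M_0\cup\{\omega\}$ for a single point $\omega$ (the singularity); $\delta(x):=d(x,\omega)$. A positive function $\psi$ on $M_0$ is quasi-linear if there are constants $0<k_1\le k_2$ with $k_1\delta\le\psi\le k_2\delta$ on $M_0$. *)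

From Stdlib Require Import Reals List.
Open Scope R_scope.
Set Implicit Arguments.

Definition is_metric {M : Type} (d : M -> M -> R) : Prop :=
  (forall x y, 0 <= d x y) /\
  (forall x y, d x y = 0 <-> x = y) /\
  (forall x y, d x y = d y x) /\
  (forall x y z, d x z <= d x y + d y z).

Definition is_open {M : Type} (d : M -> M -> R) (U : M -> Prop) : Prop :=
  forall x, U x -> exists r, 0 < r /\ forall y, d x y < r -> U y.

Definition is_compact {M : Type} (d : M -> M -> R) (K : M -> Prop) : Prop :=
  forall (I : Type) (U : I -> M -> Prop),
    (forall i, is_open d (U i)) ->
    (forall x, K x -> exists i, U i x) ->
    exists l : list I, forall x, K x -> exists i, In i l /\ U i x.

Definition locally_compact {M : Type} (d : M -> M -> R) : Prop :=
  forall x, exists K r, is_compact d K /\ 0 < r /\ forall y, d x y < r -> K y.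

Definition is_group {G : Type} (mul : G -> G -> G) (e : G) (inv : G -> G) : Prop :=
  (forall a b c, mul a (mul b c) = mul (mul a b) c) /\
  (forall a, mul e a = a /\ mul a e = a) /\
  (forall a, mul (inv a) a = e /\ mul a (inv a) = e).

Inductive generated {G : Type} (mul : G -> G -> G) (e : G) (inv : G -> G)
    (S : list G) : G -> Prop :=
  | gen_e : generated mul e inv S e
  | gen_s : forall s, In s S -> generated mul e inv S s
  | gen_inv : forall a, generated mul e inv S a -> generated mul e inv S (inv a)
  | gen_mul : forall a b, generated mul e inv S a -> generated mul e inv S b ->
              generated mul e inv S (mul a b).

Definition finitely_generated {G : Type} (mul : G -> G -> G) (e : G) (inv : G -> G) : Prop :=
  exists S : list G, forall g, generated mul e inv S g.

Definition is_action {G M : Type} (mul : G -> G -> G) (e : G) (act : G -> M -> M) : Prop :=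
  (forall x, act e x = x) /\ (forall g h x, act (mul g h) x = act g (act h x)).

Definition acts_freely {G M : Type} (e : G) (act : G -> M -> M) : Prop :=
  forall g x, act g x = x -> g = e.

Definition properly_discontinuous {G M : Type} (d : M -> M -> R) (act : G -> M -> M) : Prop :=
  forall K, is_compact d K ->
    exists l : list G, forall g, (exists x, K x /\ K (act g x)) -> In g l.

(** Compactness of the quotient M/G: open sets of the quotient are the images
    of G-invariant open sets of M, so the quotient is compact iff every cover of
    M by G-invariant open sets has a finite subcover. *)
Definition compact_quotient {G M : Type} (d : M -> M -> R) (act : G -> M -> M) : Prop :=
  forall (I : Type) (U : I -> M -> Prop),
    (forall i, is_open d (U i)) ->
    (forall i g x, U i x -> U i (act g x)) ->
    (forall x, exists i, U i x) ->
    exists l : list I, forall x, exists i, In i l /\ U i x.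

Definition cone_like {G M : Type} (d : M -> M -> R)
    (mul : G -> G -> G) (e : G) (inv : G -> G)
    (act : G -> M -> M) (rho : G -> R) : Prop :=
  is_metric d /\ locally_compact d /\
  is_group mul e inv /\ finitely_generated mul e inv /\ (exists g, g <> e) /\
  is_action mul e act /\
  (forall g, 0 < rho g /\ forall x y, d (act g x) (act g y) = rho g * d x y) /\
  (forall g, rho g = 1 -> g = e) /\
  acts_freely e act /\ properly_discontinuous d act /\ compact_quotient d act.

Definition cauchy {M : Type} (d : M -> M -> R) (u : nat -> M) : Prop :=
  forall eps, 0 < eps -> exists N, forall n m, (n >= N)%nat -> (m >= N)%nat -> d (u n) (u m) < eps.

Definition converges {M : Type} (d : M -> M -> R) (u : nat -> M) : Prop :=
  exists y, Un_cv (fun n => d (u n) y) 0.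

(** delta = distance to the singularity ω, the unique point added by the metric
    completion: non-convergent Cauchy sequences exist and all of them converge to
    ω in the completion, so d(x, ω) = lim d(x, u_n) for any such u. *)
Definition dist_to_singularity {M : Type} (d : M -> M -> R) (delta : M -> R) : Prop :=
  (exists u, cauchy d u /\ ~ converges d u) /\
  forall u, cauchy d u -> ~ converges d u ->
    forall x, Un_cv (fun n => d x (u n)) (delta x).

Definition locally_bounded {M : Type} (d : M -> M -> R) (f : M -> R) : Prop :=
  forall x, exists r C, 0 < r /\ forall y, d x y < r -> Rabs (f y) <= C.

Definition quasi_linear {M : Type} (delta psi : M -> R) : Prop :=
  exists k1 k2, 0 < k1 /\ k1 <= k2 /\ forall x, k1 * delta x <= psi x <= k2 * delta x.

From Stdlib Require Import Reals List Lra.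
Open Scope R_scope.

(** Write [q := psi / delta] for the ratio of [psi] to the distance [delta] to
    the singularity; quasi-linearity says exactly that [q] is bounded above and
    below by positive constants.
    - [delta] is positive, 1-Lipschitz and scales like the metric:
      [delta (g x) = rho g * delta x] (the image of a non-convergent Cauchy
      sequence under a homothety is again one).
    - Since [psi] scales in the same way, [q] is Γ-invariant.
    - Near any point [x], [delta] stays within [delta x / 2] of [delta x], while
      [psi] and [1 / psi] are bounded; hence [q] is locally pinched between
      positive constants.
    - A Γ-invariant function that is locally pinched is globally pinched: the
      Γ-saturations of the balls carrying local bounds are invariant open sets
      covering [M], and compactness of [M/Γ] extracts finitely many of them. *)

Lemma Un_cv_const (c : R) : Un_cv (fun _ => c) c.
Proof.
  intros eps Heps; exists 0%nat; intros n _.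
  unfold Rdist; rewrite Rminus_diag, Rabs_R0; exact Heps.
Qed.

Lemma Un_cv_ext (u v : nat -> R) (l : R) :
  (forall n, u n = v n) -> Un_cv u l -> Un_cv v l.
Proof.
  intros Huv Hu eps Heps; destruct (Hu eps Heps) as [N HN].
  exists N; intros n Hn; rewrite <- Huv; exact (HN n Hn).
Qed.

Lemma Un_cv_scale (c l : R) (u : nat -> R) :
  Un_cv u l -> Un_cv (fun n => c * u n) (c * l).
Proof. intro Hu; exact (CV_mult _ _ _ _ (Un_cv_const c) Hu). Qed.

Lemma list_pos_lower_bound {A : Type} (f : A -> R) (l : list A) :
  exists m, 0 < m /\ forall i, In i l -> 0 < f i -> m <= f i.
Proof.
  induction l as [|a l [m [Hm Hl]]].
  - exists 1; split; [lra | intros i []].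
  - destruct (Rlt_dec 0 (f a)) as [Ha | Ha].
    + exists (Rmin m (f a)); split; [now apply Rmin_glb_lt|].
      intros i [<- | Hi] Hfi; [apply Rmin_r|].
      apply Rle_trans with m; [apply Rmin_l | auto].
    + exists m; split; [exact Hm|].
      intros i [<- | Hi] Hfi; [contradiction | auto].
Qed.

Lemma list_upper_bound {A : Type} (f : A -> R) (l : list A) :
  exists m, forall i, In i l -> f i <= m.
Proof.
  induction l as [|a l [m Hl]].
  - exists 0; intros i [].
  - exists (Rmax m (f a)); intros i [<- | Hi]; [apply Rmax_r|].
    apply Rle_trans with m; [auto | apply Rmax_l].
Qed.

Lemma ratio_pinched (D dy p C C' : R) :
  0 < D -> D / 2 <= dy <= 3 * D / 2 -> 0 < p -> p <= C -> / p <= C' ->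
  0 < C' /\ 2 / (3 * D * C') <= p / dy <= 2 * C / D.
Proof.
  intros HD Hdy Hp HC HC'.
  assert (Hinv : 0 < / p) by now apply Rinv_0_lt_compat.
  assert (HC'p : 0 < C') by lra.
  assert (Hdy0 : 0 < dy) by lra.
  assert (Hlow : / C' <= p).
  { rewrite <- (Rinv_inv p); now apply Rinv_le_contravar. }
  split; [exact HC'p | split].
  - apply (Rmult_le_reg_r (3 * D * C' * dy)); [apply Rmult_lt_0_compat; [nra | lra]|].
    replace (2 / (3 * D * C') * (3 * D * C' * dy)) with (2 * dy) by (field; lra).
    replace (p / dy * (3 * D * C' * dy)) with (3 * D * (C' * p)) by (field; lra).
    assert (1 <= C' * p).
    { apply (Rmult_le_compat_l C') in Hlow; [|lra].
      now rewrite Rinv_r in Hlow by lra. }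
    nra.
  - apply (Rmult_le_reg_r (D * dy)); [nra|].
    replace (p / dy * (D * dy)) with (p * D) by (field; lra).
    replace (2 * C / D * (D * dy)) with (2 * C * dy) by (field; lra).
    nra.
Qed.

Definition pinched_on_ball {M : Type} (d : M -> M -> R) (q : M -> R) (x : M) (r a b : R)
    : Prop :=
  0 < r /\ 0 < a /\ forall y, d x y < r -> a <= q y <= b.

Lemma quasi_linear_of_ratio_bounds {M : Type} (delta psi : M -> R) (a b : R) :
  (forall x, 0 < delta x) -> 0 < a -> (forall x, a <= psi x / delta x <= b) ->
  quasi_linear delta psi.
Proof.
  intros Hdelta Ha Hab.
  exists a, (Rmax a b); split; [exact Ha | split; [apply Rmax_l|]].
  intro x; destruct (Hab x) as [Hax Hbx].
  pose proof (Hdelta x); pose proof (Rmax_r a b).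
  replace (psi x) with (psi x / delta x * delta x) by (field; lra).
  split; apply Rmult_le_compat_r; lra.
Qed.

Section ConeLike.

Variables (G M : Type) (d : M -> M -> R).
Variables (mul : G -> G -> G) (e : G) (inv : G -> G).
Variables (act : G -> M -> M) (rho : G -> R).

Hypothesis d_nonneg : forall x y, 0 <= d x y.
Hypothesis d_zero : forall x y, d x y = 0 <-> x = y.
Hypothesis d_sym : forall x y, d x y = d y x.
Hypothesis d_triangle : forall x y z, d x z <= d x y + d y z.
Hypothesis inverse_law : forall a, mul (inv a) a = e /\ mul a (inv a) = e.
Hypothesis act_e : forall x, act e x = x.
Hypothesis act_mul : forall g h x, act (mul g h) x = act g (act h x).
Hypothesis homothety :
  forall g, 0 < rho g /\ forall x y, d (act g x) (act g y) = rho g * d x y.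

Lemma d_refl (x : M) : d x x = 0.
Proof. now apply d_zero. Qed.

Lemma act_inv_l (g : G) (x : M) : act (inv g) (act g x) = x.
Proof. rewrite <- act_mul, (proj1 (inverse_law g)); apply act_e. Qed.

Lemma act_inv_r (g : G) (x : M) : act g (act (inv g) x) = x.
Proof. rewrite <- act_mul, (proj2 (inverse_law g)); apply act_e. Qed.

Lemma homothety_cauchy (g : G) (u : nat -> M) :
  cauchy d u -> cauchy d (fun n => act g (u n)).
Proof.
  intros Hu eps Heps; destruct (homothety g) as [Hr Hh].
  destruct (Hu (eps / rho g)) as [N HN]; [now apply Rdiv_lt_0_compat|].
  exists N; intros n m Hn Hm; rewrite Hh.
  specialize (HN n m Hn Hm); apply (Rmult_lt_compat_l (rho g)) in HN; [|exact Hr].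
  now replace (rho g * (eps / rho g)) with eps in HN by (field; lra).
Qed.

Lemma homothety_reflects_convergence (g : G) (u : nat -> M) :
  converges d (fun n => act g (u n)) -> converges d u.
Proof.
  intros [y Hy]; exists (act (inv g) y).
  destruct (homothety g) as [Hr Hh].
  apply Un_cv_ext with (fun n => / rho g * d (act g (u n)) y).
  - intro n; rewrite <- (act_inv_r g y) at 1; rewrite Hh.
    field; lra.
  - rewrite <- (Rmult_0_r (/ rho g)); now apply Un_cv_scale.
Qed.

Section Singularity.

Variable delta : M -> R.
Hypothesis singularity : dist_to_singularity d delta.

Lemma delta_limit :
  exists u, cauchy d u /\ ~ converges d u /\ forall x, Un_cv (fun n => d x (u n)) (delta x).
Proof.
  destruct singularity as [[u [Hu Hnu]] Hlim].
  exists u; repeat split; auto.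
Qed.

(** The singularity is not a point of [M]: [delta] is positive. *)
Lemma delta_pos (x : M) : 0 < delta x.
Proof.
  destruct delta_limit as [u [_ [Hnu Hlim]]].
  destruct (Rle_lt_dec (delta x) 0) as [Hle | Hlt]; [exfalso | exact Hlt].
  assert (Hge : 0 <= delta x).
  { apply (@Rle_cv_lim (fun _ => 0) (fun n => d x (u n)));
      [intro n; apply d_nonneg | apply Un_cv_const | apply Hlim]. }
  apply Hnu; exists x.
  apply Un_cv_ext with (fun n => d x (u n)); [intro n; apply d_sym|].
  replace 0 with (delta x) by lra; apply Hlim.
Qed.

Lemma delta_lipschitz (x y : M) : delta y <= delta x + d x y.
Proof.
  destruct delta_limit as [u [_ [_ Hlim]]].
  apply (@Rle_cv_lim (fun n => d y (u n)) (fun n => d x (u n) + d x y)).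
  - intro n; rewrite (d_sym x y); pose proof (d_triangle y x (u n)); lra.
  - apply Hlim.
  - apply CV_plus; [apply Hlim | apply Un_cv_const].
Qed.

Lemma delta_homothety (g : G) (x : M) : delta (act g x) = rho g * delta x.
Proof.
  destruct singularity as [[u [Hu Hnu]] Hlim].
  destruct (homothety g) as [_ Hh].
  assert (Hgu : Un_cv (fun n => d (act g x) (act g (u n))) (delta (act g x))).
  { apply Hlim; [now apply homothety_cauchy|].
    intro Hc; now apply Hnu, (homothety_reflects_convergence g). }
  apply (UL_sequence _ _ _ Hgu).
  apply Un_cv_ext with (fun n => rho g * d x (u n)); [intro n; now rewrite Hh|].
  now apply Un_cv_scale, Hlim.
Qed.

Lemma delta_near (x y : M) :
  d x y < delta x / 2 -> delta x / 2 <= delta y <= 3 * delta x / 2.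
Proof.
  intro Hxy; pose proof (delta_lipschitz x y); pose proof (delta_lipschitz y x).
  rewrite (d_sym y x) in *; lra.
Qed.

Lemma ratio_invariant (psi : M -> R) :
  (forall g x, psi (act g x) = rho g * psi x) ->
  forall g x, psi (act g x) / delta (act g x) = psi x / delta x.
Proof.
  intros Hpsi g x; rewrite Hpsi, delta_homothety.
  pose proof (delta_pos x); pose proof (proj1 (homothety g)); field; lra.
Qed.

Lemma ratio_locally_pinched (psi : M -> R) :
  (forall x, 0 < psi x) -> locally_bounded d psi -> locally_bounded d (fun x => / psi x) ->
  forall x, exists r a b, pinched_on_ball d (fun y => psi y / delta y) x r a b.
Proof.
  intros Hpsi Hlb Hlbi x.
  destruct (Hlb x) as [r1 [C [Hr1 HC]]]; destruct (Hlbi x) as [r2 [C' [Hr2 HC']]].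
  pose proof (delta_pos x) as HD.
  assert (Hbounds : forall y, d x y < r1 -> d x y < r2 -> psi y <= C /\ / psi y <= C').
  { intros y Hy1 Hy2; split; eapply Rle_trans; [apply Rle_abs | now apply HC
                                                | apply Rle_abs | now apply HC']. }
  assert (HC'pos : 0 < C').
  { destruct (Hbounds x) as [HCx HC'x]; try (rewrite d_refl; lra).
    apply (ratio_pinched (delta x) (delta x) (psi x) C C'); auto; lra. }
  exists (Rmin r1 (Rmin r2 (delta x / 2))), (2 / (3 * delta x * C')), (2 * C / delta x).
  split; [repeat apply Rmin_glb_lt; lra|].
  split; [apply Rdiv_lt_0_compat; [lra | repeat apply Rmult_lt_0_compat; lra]|].
  intros y Hy.
  assert (Hy1 : d x y < r1) by (eapply Rlt_le_trans; [exact Hy | apply Rmin_l]).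
  assert (Hy23 : d x y < Rmin r2 (delta x / 2))
    by (eapply Rlt_le_trans; [exact Hy | apply Rmin_r]).
  assert (Hy2 : d x y < r2) by (eapply Rlt_le_trans; [exact Hy23 | apply Rmin_l]).
  assert (Hy3 : d x y < delta x / 2) by (eapply Rlt_le_trans; [exact Hy23 | apply Rmin_r]).
  destruct (Hbounds y Hy1 Hy2) as [HCy HC'y].
  now apply (ratio_pinched (delta x) (delta y) (psi y) C C'); auto using delta_near.
Qed.

End Singularity.

Section InvariantBounds.

Variable q : M -> R.
Hypothesis q_invariant : forall g x, q (act g x) = q x.
Hypothesis quotient_compact : compact_quotient d act.

(** The Γ-saturation of a ball carrying a pinching (empty if the data do not
    form one); these are the open invariant sets to which compactness of [M/Γ]
    is applied. *)
Definition saturated_pinched_ball (i : M * R * R * R) (y : M) : Prop :=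
  let '(x, r, a, b) := i in
  pinched_on_ball d q x r a b /\ exists g, d x (act g y) < r.

Lemma saturated_pinched_ball_open (i : M * R * R * R) :
  is_open d (saturated_pinched_ball i).
Proof.
  destruct i as [[[x r] a] b]; intros y [Hp [g Hgy]].
  destruct (homothety g) as [Hr Hh].
  exists ((r - d x (act g y)) / rho g); split; [apply Rdiv_lt_0_compat; lra|].
  intros z Hz; split; [exact Hp|]; exists g.
  apply Rle_lt_trans with (1 := d_triangle x (act g y) (act g z)); rewrite Hh.
  apply (Rmult_lt_compat_l (rho g)) in Hz; [|exact Hr].
  replace (rho g * ((r - d x (act g y)) / rho g)) with (r - d x (act g y)) in Hz
    by (field; lra).
  lra.
Qed.

Lemma saturated_pinched_ball_invariant (i : M * R * R * R) (g : G) (y : M) :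
  saturated_pinched_ball i y -> saturated_pinched_ball i (act g y).
Proof.
  destruct i as [[[x r] a] b]; intros [Hp [h Hh]]; split; [exact Hp|].
  exists (mul h (inv g)); now rewrite act_mul, act_inv_l.
Qed.

Lemma invariant_locally_pinched_bounded :
  (forall x, exists r a b, pinched_on_ball d q x r a b) ->
  exists a b, 0 < a /\ forall x, a <= q x <= b.
Proof.
  intro Hloc.
  destruct (quotient_compact _ saturated_pinched_ball) as [l Hl].
  - exact saturated_pinched_ball_open.
  - exact saturated_pinched_ball_invariant.
  - intro x; destruct (Hloc x) as [r [a [b Hp]]].
    exists (x, r, a, b); split; [exact Hp|].
    exists e; rewrite act_e, d_refl; apply Hp.
  - destruct (list_pos_lower_bound (fun i : M * R * R * R => let '(_, _, a, _) := i in a) l)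
      as [m [Hm Hlow]].
    destruct (list_upper_bound (fun i : M * R * R * R => let '(_, _, _, b) := i in b) l)
      as [k Hup].
    exists m, k; split; [exact Hm|]; intro x.
    destruct (Hl x) as [[[[x0 r] a] b] [Hin [[Hr [Ha Hball]] [g Hgx]]]].
    specialize (Hball _ Hgx); rewrite q_invariant in Hball.
    specialize (Hlow _ Hin Ha); specialize (Hup _ Hin); simpl in Hlow, Hup.
    lra.
Qed.

End InvariantBounds.

End ConeLike.

Theorem mainTheorem5 (G M : Type) (d : M -> M -> R)
    (mul : G -> G -> G) (e : G) (inv : G -> G)
    (act : G -> M -> M) (rho : G -> R) (delta psi : M -> R) :
  cone_like d mul e inv act rho ->
  dist_to_singularity d delta ->
  (forall x, 0 < psi x) ->
  (forall g x, psi (act g x) = rho g * psi x) ->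
  locally_bounded d psi ->
  locally_bounded d (fun x => / psi x) ->
  quasi_linear delta psi.
Proof.
  intros [[Hd0 [Hdeq [Hdsym Htri]]]
          [_ [[_ [_ Hinv]] [_ [_ [[Hact_e Hact_m] [Hrho [_ [_ [_ Hcq]]]]]]]]]]
    Hsing Hpsi Hpsig Hlb Hlbi.
  assert (Hdelta_pos : forall x, 0 < delta x) by (eapply delta_pos; eassumption).
  assert (Hq_bounds : exists a b, 0 < a /\ forall x, a <= psi x / delta x <= b).
  { eapply invariant_locally_pinched_bounded; try eassumption.
    - eapply ratio_invariant; eassumption.
    - eapply ratio_locally_pinched; eassumption. }
  destruct Hq_bounds as [a [b [Ha Hab]]].
  exact (quasi_linear_of_ratio_bounds delta psi a b Hdelta_pos Ha Hab).
Qed.
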